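(* Let $p_k$ denote the $k$th prime and $S_n^{(\alpha)}=\sum_{k=1}^n p_k^{\alpha}$. Let $\alpha\geqslant 1$ and let $n$ be a positive integer with $n\geqslant 55$. Then $$\log S_n^{(\alpha)}>(\alpha+1)\log n.$$
   Context: $p_k$ is the $k$th prime ($p_1=2$), $S_n^{(\alpha)}=\sum_{k=1}^n p_k^{\alpha}$, and $\log$ is the natural logarithm. *)

From mathcomp Require Import ssreflect ssrfun ssrbool eqtype ssrnat div prime.
From Stdlib Require Import Reals.

Definition next_prime (m : nat) : nat :=
  ex_minn (let: exist2 p Hmp Hp := prime_above m in
           ex_intro (fun q => (m < q) && prime q) p (introT andP (conj Hmp Hp))).

(* pk k = p_k, the k-th prime, 1-indexed: pk 1 = 2, pk 2 = 3, ...
   (pk 0 = 1 is a dummy value, never used) *)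
Fixpoint pk (k : nat) : nat :=
  match k with
  | 0 => 1
  | k'.+1 => next_prime (pk k')
  end.

Fixpoint Ssum (alpha : R) (n : nat) : R :=
  match n with
  | 0 => 0%R
  | n'.+1 => (Ssum alpha n' + Rpower (INR (pk n'.+1)) alpha)%R
  end.

(* Convexity of [y |-> y^a] for [a >= 1] gives the tangent-line bound
   [p^a >= n^a + a n^(a-1) (p - n)].  Summing it over the first [n] primes,
   [S_n^(a) >= n^(a+1) + a n^(a-1) (S_n^(1) - n^2)], and [S_n^(1) > n^2]
   because [p_k >= 2k - 1] with [p_1 = 2].  Hence [S_n^(a) > n^(a+1)] for
   every [n >= 1]. *)
From Stdlib Require Import Lra Lia.
From mathcomp Require Import ssreflect ssrfun ssrbool eqtype ssrnat prime zify.
From Stdlib Require Import Reals.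

Lemma next_primeP m :
  [/\ m < next_prime m, prime (next_prime m)
    & forall q, m < q -> prime q -> next_prime m <= q].
Proof.
rewrite /next_prime; case: ex_minnP => p /andP[lt_mp pr_p] min_p.
by split=> // q lt_mq pr_q; apply: min_p; rewrite lt_mq.
Qed.

Lemma pk1 : pk 1 = 2.
Proof.
have [/= lt_1p pr_p min_p] := next_primeP 1.
by apply/eqP; rewrite eqn_leq min_p // andbT prime_gt1.
Qed.

Lemma prime_pk k : prime (pk k.+1).
Proof. by case: (next_primeP (pk k)). Qed.

Lemma pk_ltS k : pk k < pk k.+1.
Proof. by case: (next_primeP (pk k)). Qed.

Lemma odd_pk k : odd (pk k.+2).
Proof.
have lt2 : 2 < pk k.+2 by apply: leq_trans (pk_ltS k.+1); exact: prime_gt1 (prime_pk k).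
by case: (even_prime (prime_pk k.+1)) => [eq2 | //]; rewrite eq2 in lt2.
Qed.

Lemma pkS_ge k : (2 * k).+1 <= pk k.+1.
Proof.
elim: k => [|k IHk]; first by rewrite pk1.
have lt_pk := pk_ltS k.+1; have odd_p := odd_pk k.
have ne_p : pk k.+2 != (2 * k.+1) by apply: contraTneq odd_p => ->; rewrite mul2n odd_double.
lia.
Qed.

Open Scope R_scope.

Lemma Rpower_gt0 x a : 0 < Rpower x a.
Proof. exact: exp_pos. Qed.

Lemma SsumS a m : Ssum a m.+1 = Ssum a m + Rpower (INR (pk m.+1)) a.
Proof. by []. Qed.

Lemma INR_pk_gt0 k : 0 < INR (pk k.+1).
Proof. apply: lt_0_INR; apply/ltP; exact: prime_gt0 (prime_pk k). Qed.

Lemma tangent_le_of_deriv_nondecr (f f' : R -> R) (x0 x : R) :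
  0 < x0 -> 0 < x ->
  (forall c, 0 < c -> derivable_pt_lim f c (f' c)) ->
  (forall c d, 0 < c -> c <= d -> f' c <= f' d) ->
  f x0 + f' x0 * (x - x0) <= f x.
Proof.
move=> x0_gt0 x_gt0 f'_deriv f'_nondecr.
case: (Rtotal_order x x0) => [lt_x | [-> | gt_x]]; last 2 first.
- lra.
- have [c [mvt [lt_x0c lt_cx]]] := MVT_cor2 f f' x0 x gt_x (fun c _ => f'_deriv c ltac:(lra)).
  have le_f' : f' x0 <= f' c by apply: f'_nondecr; lra.
  nra.
- have [c [mvt [lt_xc lt_cx0]]] := MVT_cor2 f f' x x0 lt_x (fun c _ => f'_deriv c ltac:(lra)).
  have le_f' : f' c <= f' x0 by apply: f'_nondecr; lra.
  nra.
Qed.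

Lemma Rpower_tangent_le a x0 x : 1 <= a -> 0 < x0 -> 0 < x ->
  Rpower x0 a + a * Rpower x0 (a - 1) * (x - x0) <= Rpower x a.
Proof.
move=> a_ge1 x0_gt0 x_gt0.
apply: (tangent_le_of_deriv_nondecr (fun y => Rpower y a)
                                   (fun y => a * Rpower y (a - 1)))
  => // [c c_gt0 | c d c_gt0 le_cd].
- exact: derivable_pt_lim_power.
- apply: Rmult_le_compat_l; first lra.
  apply: Rle_Rpower_l; lra.
Qed.

Lemma Ssum_ge_tangent a x0 m : 1 <= a -> 0 < x0 ->
  INR m * Rpower x0 a + a * Rpower x0 (a - 1) * (Ssum 1 m - INR m * x0)
    <= Ssum a m.
Proof.
move=> a_ge1 x0_gt0; elim: m => [/= | m IHm]; first lra.
rewrite !SsumS Rpower_1 ?S_INR; last exact: INR_pk_gt0.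
have := Rpower_tangent_le _ _ _ a_ge1 x0_gt0 (INR_pk_gt0 m).
nra.
Qed.

Lemma Ssum1_gt_sqr n : (1 <= n)%nat -> INR n * INR n < Ssum 1 n.
Proof.
case: n => // n _; elim: n => [|n IHn].
  rewrite SsumS pk1 Rpower_1 /=; lra.
rewrite SsumS Rpower_1; last exact: INR_pk_gt0.
have le_p : (2 * n + 3 <= pk n.+2)%coq_nat by have := pkS_ge n.+1; lia.
have := le_INR _ _ le_p; rewrite plus_INR mult_INR !S_INR /= in IHn *; lra.
Qed.

Theorem lemma3p2 (alpha : R) (n : nat) :
  1 <= alpha -> (55 <= n)%coq_nat -> ln (Ssum alpha n) > (alpha + 1) * ln (INR n).
Proof.
move=> alpha_ge1 n_ge55.
have n_gt0 : 0 < INR n by apply: lt_0_INR; lia.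
have tangent := Ssum_ge_tangent _ _ n alpha_ge1 n_gt0.
have sum_gt : INR n * INR n < Ssum 1 n by apply: Ssum1_gt_sqr; lia.
have slope_gt0 : 0 < alpha * Rpower (INR n) (alpha - 1).
  by apply: Rmult_lt_0_compat; [lra | exact: Rpower_gt0].
have pow_lt : Rpower (INR n) (alpha + 1) < Ssum alpha n.
  rewrite Rpower_plus Rpower_1 //; nra.
rewrite -ln_Rpower; apply: ln_increasing => //; exact: Rpower_gt0.
Qed.
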